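(* Let $0<\alpha<1/2$, let $M>0$ and let $k:=\prod_{p\le M}p$ (product over primes). For every positive divisor $c$ of $k$, \[ \frac{1}{k^2}\sum_{d\mid k}(c,d)^{2\alpha}\Bigl(\phi\bigl(\tfrac kc\bigr)\phi\bigl(\tfrac kd\bigr)\Bigr)^{\alpha}\bigl(\phi(c)\phi(d)\bigr)^{1-\alpha}=\prod_{p\mid k}\Bigl(\frac1p\Bigl(1-\frac1p\Bigr)+\Bigl(1-\frac1p\Bigr)^{2-2\alpha}\Bigr)\frac{c}{k}\,f\Bigl(\frac kc\Bigr). \] Moreover, \[ \frac{1}{k^2}\sum_{c,d\mid k}(c,d)^{2\alpha}\Bigl(\phi\bigl(\tfrac kc\bigr)\phi\bigl(\tfrac kd\bigr)\Bigr)^{\alpha}\bigl(\phi(c)\phi(d)\bigr)^{1-\alpha}=\prod_{p\mid k}\Bigl(p^{2\alpha-2}\Bigl(1-\frac1p\Bigr)^{2\alpha}+\frac2p\Bigl(1-\frac1p\Bigr)+\Bigl(1-\frac1p\Bigr)^{2-2\alpha}\Bigr). \]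
   Context: $\phi$ is Euler's totient function, $(c,d)$ is the greatest common divisor, sums over $d\mid k$ run over positive divisors, and products over $p$ run over primes. The multiplicative function $f$ is defined by \[ f(n):=\prod_{p\mid n}\frac{p^{2\alpha-1}\bigl(1-\frac1p\bigr)^{2\alpha}+\bigl(1-\frac1p\bigr)}{\frac1p\bigl(1-\frac1p\bigr)+\bigl(1-\frac1p\bigr)^{2-2\alpha}}. \] *)

From mathcomp Require Import all_boot all_order all_algebra.
From mathcomp Require Import all_classical all_reals all_analysis.
Set Implicit Arguments. Unset Strict Implicit. Unset Printing Implicit Defensive.
Import Order.TTheory GRing.Theory Num.Theory.
Local Open Scope ring_scope.

(* k = product of the primes p <= M (p ranges over 0..truncn M, which
   contains every natural number <= M; the filter p%:R <= M is exact). *)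
Definition primorial {R : realType} (M : R) : nat :=
  (\prod_(p <- iota 0 (Num.truncn M).+1 | prime p && (p%:R <= M)%R) p)%N.

Definition fmul {R : realType} (alpha : R) (n : nat) : R :=
  \prod_(p <- primes n)
    ((p%:R `^ (2 * alpha - 1) * (1 - p%:R^-1) `^ (2 * alpha) + (1 - p%:R^-1))
     / (p%:R^-1 * (1 - p%:R^-1) + (1 - p%:R^-1) `^ (2 - 2 * alpha))).

Definition summand {R : realType} (alpha : R) (k c d : nat) : R :=
  (gcdn c d)%:R `^ (2 * alpha)
  * ((totient (k %/ c))%:R * (totient (k %/ d))%:R) `^ alpha
  * ((totient c)%:R * (totient d)%:R) `^ (1 - alpha).

(* Since k is squarefree, a divisor d of k is determined by the set of primes
   p | k dividing it, d = prod_p p^[p | d], and gcd, quotient k/d and totient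
   act prime by prime on this description.  Hence the summand is a product over
   p | k of the summand for k = p, and the sum over d (resp. over c and d)
   factors as an Euler product whose factor at p is a sum of two (resp. four)
   explicit terms; each such factor is then a direct computation with
   x = p and y = p - 1. *)

From mathcomp Require Import all_boot all_order all_algebra.
From mathcomp Require Import all_classical all_reals all_analysis.
From mathcomp Require Import ring.
Import Order.TTheory GRing.Theory Num.Theory.

Lemma dvdn_prime_mull {p q : nat} m : prime p -> prime q -> p != q -> (p %| q * m) = (p %| m).
Proof.
by move=> p_pr q_pr p_neq_q; rewrite Euclid_dvdM // dvdn_prime2 // (negbTE p_neq_q).
Qed.

Lemma prime_dvd_prod_expb {s : seq nat} (b : pred nat) q : prime q -> all prime s ->
  (q %| \prod_(p <- s) p ^ b p) = (q \in s) && b q.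
Proof.
move=> q_pr; elim: s => [|p s IHs] /=.
  by rewrite big_nil dvdn1; case: eqP q_pr => // ->.
case/andP=> p_pr s_pr; rewrite big_cons Euclid_dvdM // IHs // in_cons andb_orl.
congr (_ || _); have [-> | q_neq_p] := eqVneq q p.
  by case: (b p); rewrite ?dvdnn ?dvdn1 ?(gtn_eqF (prime_gt1 p_pr)).
by case: (b p); rewrite ?dvdn1 ?dvdn_prime2 ?(negbTE q_neq_p) //; case: eqP q_pr => // ->.
Qed.

Lemma prime_dvd_prod {s : seq nat} q : prime q -> all prime s ->
  (q %| \prod_(p <- s) p) = (q \in s).
Proof.
move=> q_pr s_pr; have := @prime_dvd_prod_expb s predT q q_pr s_pr.
by rewrite andbT; under eq_bigr do rewrite expn1.
Qed.

Lemma prod_expbC (s : seq nat) (b : pred nat) :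
  (\prod_(p <- s) p ^ b p * \prod_(p <- s) p ^ ~~ b p)%N = \prod_(p <- s) p.
Proof.
rewrite -big_split /=; apply: eq_bigr => p _.
by case: (b p); rewrite /= ?expn1 ?expn0 ?muln1 ?mul1n.
Qed.

Lemma prod_primes_gt0 {s : seq nat} : all prime s -> 0 < \prod_(p <- s) p.
Proof.
move=> s_pr; rewrite big_seq; elim/big_ind: _ => // [m n m_gt0 n_gt0 | p].
  by rewrite muln_gt0 m_gt0.
by move=> /(allP s_pr)/prime_gt0.
Qed.

Lemma prod_expb_gt0 {s : seq nat} (b : pred nat) : all prime s ->
  0 < \prod_(p <- s) p ^ b p.
Proof.
by move/prod_primes_gt0; rewrite -(prod_expbC s b) muln_gt0 => /andP[].
Qed.

Lemma primes_prod_expb {s : seq nat} (b : pred nat) : uniq s -> all prime s ->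
  perm_eq (primes (\prod_(p <- s) p ^ b p)) [seq p <- s | b p].
Proof.
move=> s_uniq s_pr; apply: uniq_perm; rewrite ?primes_uniq ?filter_uniq // => q.
rewrite mem_primes prod_expb_gt0 // mem_filter.
have [q_pr | q_npr] /= := boolP (prime q); first by rewrite prime_dvd_prod_expb // andbC.
by apply/esym/negP=> /andP[_ /(allP s_pr)]; rewrite (negbTE q_npr).
Qed.

Lemma primes_prod_primes {s : seq nat} : uniq s -> all prime s ->
  perm_eq (primes (\prod_(p <- s) p)) s.
Proof.
move=> s_uniq s_pr; have := primes_prod_expb predT s_uniq s_pr.
by rewrite filter_predT; under eq_bigr do rewrite expn1.
Qed.

Lemma totient_expb p (b : bool) : prime p -> totient (p ^ b) = p.-1 ^ b.
Proof. by case: b => p_pr; rewrite /= ?expn1 ?expn0 ?(totient_prime p_pr). Qed.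

Lemma totient_prod_expb {s : seq nat} (b : pred nat) : uniq s -> all prime s ->
  totient (\prod_(p <- s) p ^ b p) = \prod_(p <- s) p.-1 ^ b p.
Proof.
elim: s => [|p s IHs] /=; first by rewrite !big_nil.
case/andP=> p_s s_uniq /andP[p_pr s_pr]; rewrite !big_cons totient_coprime ?IHs //.
  by case: (b p); rewrite ?expn1 ?expn0 ?(totient_prime p_pr).
case: (b p); rewrite ?expn1 ?expn0 ?coprime1n // prime_coprime //.
by rewrite prime_dvd_prod_expb // (negbTE p_s).
Qed.

Lemma divn_expb p (b : bool) : 0 < p -> p %/ p ^ b = p ^ ~~ b.
Proof. by case: b => p_gt0; rewrite /= ?expn1 ?expn0 ?divnn ?p_gt0 ?divn1. Qed.

Lemma divn_prod_expb {s : seq nat} (b : pred nat) : all prime s ->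
  (\prod_(p <- s) p) %/ \prod_(p <- s) p ^ b p = \prod_(p <- s) p ^ ~~ b p.
Proof. by move=> s_pr; rewrite -(prod_expbC s b) mulKn ?prod_expb_gt0. Qed.

Lemma divisor_prod_primesE {s : seq nat} n : uniq s -> all prime s ->
  n %| \prod_(p <- s) p -> n = \prod_(p <- s) p ^ (p %| n).
Proof.
elim: s n => [|q s IHs] n /=; first by rewrite !big_nil dvdn1 => _ _ /eqP.
case/andP=> q_s s_uniq /andP[q_pr s_pr]; rewrite !big_cons => n_dvd.
have dvd_qM r : {in s, forall p, (p %| q * r) = (p %| r)}.
  move=> p p_s; rewrite (dvdn_prime_mull r (allP s_pr p p_s) q_pr) //.
  by apply: contraNneq q_s => <-.
have [/dvdnP[m n_eq] | q_ndvd_n] := boolP (q %| n).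
  rewrite n_eq expn1 mulnC; congr (_ * _).
  rewrite [LHS](IHs m) //; last by rewrite -(dvdn_pmul2l (prime_gt0 q_pr)) -mulnC -n_eq.
  by apply: eq_big_seq => p p_s; rewrite dvd_qM.
rewrite expn0 mul1n {1}(IHs n) //.
by rewrite -(Gauss_dvdr _ (_ : coprime n q)) // coprime_sym prime_coprime.
Qed.

Lemma gcdn_expb p (b1 b2 : bool) : gcdn (p ^ b1) (p ^ b2) = p ^ (b1 && b2).
Proof. by case: b1 b2 => [] []; rewrite ?gcdnn ?gcdn1 ?gcd1n. Qed.

Lemma gcdn_prod_expb {s : seq nat} (b1 b2 : pred nat) : uniq s -> all prime s ->
  gcdn (\prod_(p <- s) p ^ b1 p) (\prod_(p <- s) p ^ b2 p)
  = \prod_(p <- s) p ^ (b1 p && b2 p).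
Proof.
move=> s_uniq s_pr; rewrite [LHS](divisor_prod_primesE _ s_uniq s_pr); last first.
  by rewrite (dvdn_trans (dvdn_gcdl _ _)) // -(prod_expbC s b1) dvdn_mulr.
apply: eq_big_seq => p p_s; have p_pr := allP s_pr p p_s.
by rewrite dvdn_gcd !prime_dvd_prod_expb // p_s.
Qed.

Lemma divisors_mul_prime {q k : nat} : prime q -> 0 < k -> ~~ (q %| k) ->
  perm_eq (divisors (q * k)) (divisors k ++ [seq q * d | d <- divisors k]).
Proof.
move=> q_pr k_gt0 q_ndvd; have q_gt0 := prime_gt0 q_pr.
apply: uniq_perm => [|| n]; first exact: divisors_uniq.
  rewrite cat_uniq divisors_uniq map_inj_uniq ?divisors_uniq => [|d e /eqP]; last first.
    by rewrite eqn_pmul2l // => /eqP.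
  rewrite andbT; apply/hasPn => _ /mapP[d _ ->].
  by rewrite -dvdn_divisors //; apply: contra q_ndvd; apply: dvdn_trans (dvdn_mulr _ _).
rewrite mem_cat -!dvdn_divisors ?muln_gt0 ?q_gt0 //.
apply/idP/orP => [n_dvd | [n_dvd | /mapP[d d_dvd ->]]].
- have [/dvdnP[m n_eq] | q_ndvd_n] := boolP (q %| n).
    right; apply/mapP; exists m; last by rewrite n_eq mulnC.
    by rewrite -dvdn_divisors // -(dvdn_pmul2l q_gt0) -[q * m]mulnC -n_eq.
  by left; rewrite -(Gauss_dvdr _ (_ : coprime n q)) // coprime_sym prime_coprime.
- exact: dvdn_mull.
by rewrite dvdn_pmul2l // dvdn_divisors.
Qed.

Local Open Scope ring_scope.

Lemma sum_divisors_prod_primes {R : comPzSemiRingType} (F : nat -> bool -> R)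
    {s : seq nat} : uniq s -> all prime s ->
  \sum_(d <- divisors (\prod_(p <- s) p)) \prod_(p <- s) F p (p %| d)%N
  = \prod_(p <- s) (F p false + F p true).
Proof.
elim: s => [|q s IHs] /=; first by rewrite !big_nil big_seq1 big_nil.
case/andP=> q_s s_uniq /andP[q_pr s_pr].
have k_gt0 := prod_primes_gt0 s_pr.
have q_ndvd : ~~ (q %| \prod_(p <- s) p)%N by rewrite prime_dvd_prod.
rewrite big_cons (perm_big _ (divisors_mul_prime q_pr k_gt0 q_ndvd)) big_cat big_map /=.
rewrite big_cons mulrDl -IHs // !big_distrr /=.
congr (_ + _); apply: eq_big_seq => d; rewrite -dvdn_divisors // => d_dvd; rewrite big_cons.
  by rewrite (contraNF (fun q_dvd_d => dvdn_trans q_dvd_d d_dvd) q_ndvd).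
rewrite dvdn_mulr //; congr (_ * _); apply: eq_big_seq => p p_s.
by rewrite (dvdn_prime_mull d (allP s_pr p p_s) q_pr) //; apply: contraNneq q_s => <-.
Qed.

Section PowR.
Variable R : realType.
Implicit Types (x y r : R).

Lemma powR_prod (I : Type) (s : seq I) (F : I -> R) r : (forall i, 0 <= F i) ->
  (\prod_(i <- s) F i) `^ r = \prod_(i <- s) F i `^ r.
Proof.
move=> F_ge0; elim: s => [|i s IHs]; first by rewrite !big_nil powR1.
by rewrite !big_cons powRM ?IHs ?prodr_ge0.
Qed.

Lemma powRV x r : 0 <= x -> x^-1 `^ r = (x `^ r)^-1.
Proof. by move=> x_ge0; rewrite -powR_inv1 // -powRrM mulN1r powRN. Qed.

Lemma powR_div x y r : 0 <= x -> 0 <= y -> (x / y) `^ r = x `^ r / y `^ r.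
Proof. by move=> x_ge0 y_ge0; rewrite powRM ?powRV ?invr_ge0. Qed.

Lemma powR_mul2 x r : x `^ (2 * r) = (x `^ r) ^+ 2.
Proof. by rewrite mulrC powRrM -powR_mulrn ?powR_ge0. Qed.

Lemma powR_1B x r : 0 < x -> x `^ (1 - r) = x / x `^ r.
Proof. by move=> x_gt0; rewrite powRB ?(lt0r_neq0 x_gt0) ?implybT ?powRr1 ?ltW. Qed.

Lemma powR_2B x r : 0 < x -> x `^ (2 - 2 * r) = (x / x `^ r) ^+ 2.
Proof.
move=> x_gt0; rewrite powRB ?(lt0r_neq0 x_gt0) ?implybT ?powR_mulrn ?ltW //.
by rewrite powR_mul2 expr_div_n.
Qed.

Lemma powR_B1 x r : 0 < x -> x `^ (2 * r - 1) = (x `^ r) ^+ 2 / x.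
Proof.
by move=> x_gt0; rewrite powRB ?(lt0r_neq0 x_gt0) ?implybT ?powRr1 ?ltW // powR_mul2.
Qed.

Lemma powR_B2 x r : 0 < x -> x `^ (2 * r - 2) = (x `^ r / x) ^+ 2.
Proof.
move=> x_gt0; rewrite powRB ?(lt0r_neq0 x_gt0) ?implybT ?powR_mulrn ?ltW //.
by rewrite powR_mul2 expr_div_n.
Qed.

End PowR.

Definition d_factor {R : realType} (alpha : R) (p : nat) : R :=
  p%:R^-1 * (1 - p%:R^-1) + (1 - p%:R^-1) `^ (2 - 2 * alpha).

Definition f_factor {R : realType} (alpha : R) (p : nat) : R :=
  (p%:R `^ (2 * alpha - 1) * (1 - p%:R^-1) `^ (2 * alpha) + (1 - p%:R^-1))
  / d_factor alpha p.

Definition cd_factor {R : realType} (alpha : R) (p : nat) : R :=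
  p%:R `^ (2 * alpha - 2) * (1 - p%:R^-1) `^ (2 * alpha)
  + 2 / p%:R * (1 - p%:R^-1) + (1 - p%:R^-1) `^ (2 - 2 * alpha).

Lemma summand_prime_expb (R : realType) (alpha : R) p (b1 b2 : bool) : prime p ->
  summand alpha p (p ^ b1) (p ^ b2)
  = (p ^ (b1 && b2))%:R `^ (2 * alpha)
    * ((p.-1 ^ ~~ b1)%:R * (p.-1 ^ ~~ b2)%:R) `^ alpha
    * ((p.-1 ^ b1)%:R * (p.-1 ^ b2)%:R) `^ (1 - alpha).
Proof. by move=> p_pr; rewrite /summand gcdn_expb !divn_expb ?prime_gt0 // !totient_expb. Qed.

Section LocalFactors.
Variables (R : realType) (alpha : R) (p : nat).
Hypothesis p_pr : prime p.

Let x : R := p%:R.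
Let y : R := x - 1.
Let z : R := x `^ alpha.
Let w : R := y `^ alpha.

Let y_gt0 : 0 < y. Proof. by rewrite subr_gt0 ltr1n prime_gt1. Qed.
Let x_gt0 : 0 < x. Proof. by rewrite ltr0n prime_gt0. Qed.
Let x_neq0 : x != 0. Proof. exact: lt0r_neq0. Qed.
Let z_neq0 : z != 0. Proof. by rewrite gt_eqF ?powR_gt0. Qed.
Let w_neq0 : w != 0. Proof. by rewrite gt_eqF ?powR_gt0. Qed.

Let predpE : p.-1%:R = y.
Proof. by rewrite -subn1 natrB ?prime_gt0. Qed.

Let one_sub_invE : 1 - x^-1 = y / x.
Proof. by rewrite mulrBl divff ?gt_eqF // mul1r. Qed.

Let summand_valueE (b1 b2 : bool) :
  summand alpha p (p ^ b1) (p ^ b2)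
  = if b1 && b2 then (z * y / w) ^+ 2 else if b1 || b2 then y else w ^+ 2.
Proof.
rewrite summand_prime_expb //.
case: b1 b2 => [] []; rewrite /= ?expn1 ?expn0 ?predpE ?mul1r ?mulr1 ?powR1 -/x.
- by rewrite powR_mul2 -/z powRM ?ltW // powR_1B // -/w; field.
- by rewrite powR_1B // -/w; field.
- by rewrite powR_1B // -/w; field.
- by rewrite powRM ?ltW // -/w; ring.
Qed.

Let d_factorE : d_factor alpha p = y / x ^+ 2 + (y * z / (x * w)) ^+ 2.
Proof.
rewrite /d_factor -/x one_sub_invE powR_2B ?divr_gt0 // powR_div ?ltW // -/z -/w.
by field; rewrite ?x_neq0 ?z_neq0 ?w_neq0.
Qed.

Let d_factor_neq0 : d_factor alpha p != 0.
Proof. by rewrite d_factorE gt_eqF // ltr_pwDl ?sqr_ge0 ?divr_gt0 ?exprn_gt0. Qed.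

Lemma summand_prime_sum_d (b : bool) :
  (p%:R ^+ 2)^-1
    * (summand alpha p (p ^ b) (p ^ false) + summand alpha p (p ^ b) (p ^ true))
  = d_factor alpha p * ((p ^ b)%:R / p%:R) * (if b then 1 else f_factor alpha p).
Proof.
rewrite !summand_valueE -/x; case: b; rewrite /= ?expn1 ?expn0 -/x.
  by rewrite d_factorE divff ?mulr1 //; field; rewrite ?x_neq0 ?z_neq0 ?w_neq0.
rewrite /f_factor mulrAC [d_factor _ _ * _]mulrC divfK //.
rewrite one_sub_invE powR_B1 // powR_div ?ltW // !powR_mul2 -/z -/w.
by field; rewrite ?x_neq0 ?z_neq0 ?w_neq0.
Qed.

Lemma summand_prime_sum_cd :
  (p%:R ^+ 2)^-1
    * ((summand alpha p (p ^ false) (p ^ false) + summand alpha p (p ^ false) (p ^ true))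
       + (summand alpha p (p ^ true) (p ^ false) + summand alpha p (p ^ true) (p ^ true)))
  = cd_factor alpha p.
Proof.
rewrite !summand_valueE /= /cd_factor -/x one_sub_invE powR_B2 // powR_2B ?divr_gt0 //.
rewrite !powR_div ?ltW // !powR_mul2 -/z -/w.
by field; rewrite ?x_neq0 ?z_neq0 ?w_neq0.
Qed.

End LocalFactors.

Lemma natr_prod_sqrV (F : fieldType) (s : seq nat) :
  ((\prod_(p <- s) p)%:R ^+ 2)^-1 = \prod_(p <- s) (p%:R ^+ 2)^-1 :> F.
Proof. by rewrite natr_prod -prodrXl prodfV. Qed.

Section SquarefreeSums.
Variables (R : realType) (alpha : R) (s : seq nat).
Hypotheses (s_uniq : uniq s) (s_pr : all prime s).

Lemma summand_prod_expb (b1 b2 : pred nat) :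
  summand alpha (\prod_(p <- s) p) (\prod_(p <- s) p ^ b1 p) (\prod_(p <- s) p ^ b2 p)
  = \prod_(p <- s) summand alpha p (p ^ b1 p) (p ^ b2 p).
Proof.
rewrite [LHS]/summand gcdn_prod_expb // !divn_prod_expb // !totient_prod_expb //.
rewrite !natr_prod -!big_split /= !powR_prod => [|p|p|p]; rewrite ?mulr_ge0 //.
rewrite -!big_split; apply: eq_big_seq => p p_s /=.
by rewrite summand_prime_expb ?(allP s_pr).
Qed.

Lemma fmul_prod_expb (b : pred nat) :
  fmul alpha (\prod_(p <- s) p ^ b p)
  = \prod_(p <- s) (if b p then f_factor alpha p else 1).
Proof.
by rewrite /fmul (perm_big _ (primes_prod_expb _ s_uniq s_pr)) big_filter big_mkcond.
Qed.

Lemma sum_divisors_summand (b : pred nat) :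
  \sum_(d <- divisors (\prod_(p <- s) p))
    summand alpha (\prod_(p <- s) p) (\prod_(p <- s) p ^ b p) d
  = \prod_(p <- s)
      (summand alpha p (p ^ b p) (p ^ false) + summand alpha p (p ^ b p) (p ^ true)).
Proof.
pose F p b' := summand alpha p (p ^ b p) (p ^ b').
rewrite -(sum_divisors_prod_primes F s_uniq s_pr).
apply: eq_big_seq => d; rewrite -dvdn_divisors ?prod_primes_gt0 // => d_dvd.
by rewrite [in LHS](divisor_prod_primesE _ s_uniq s_pr d_dvd) summand_prod_expb.
Qed.

Lemma sum_d_summand_prod_expb (b : pred nat) :
  ((\prod_(p <- s) p)%:R ^+ 2)^-1
    * \sum_(d <- divisors (\prod_(p <- s) p))
        summand alpha (\prod_(p <- s) p) (\prod_(p <- s) p ^ b p) d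
  = \prod_(p <- s) d_factor alpha p
    * ((\prod_(p <- s) p ^ b p)%:R / (\prod_(p <- s) p)%:R)
    * fmul alpha ((\prod_(p <- s) p) %/ \prod_(p <- s) p ^ b p).
Proof.
rewrite sum_divisors_summand natr_prod_sqrV divn_prod_expb // fmul_prod_expb.
rewrite !natr_prod -prodfV -!big_split; apply: eq_big_seq => p p_s /=.
by rewrite if_neg summand_prime_sum_d ?(allP s_pr).
Qed.

Lemma sum_cd_summand_prod_primes :
  ((\prod_(p <- s) p)%:R ^+ 2)^-1
    * \sum_(c <- divisors (\prod_(p <- s) p)) \sum_(d <- divisors (\prod_(p <- s) p))
        summand alpha (\prod_(p <- s) p) c d
  = \prod_(p <- s) cd_factor alpha p.
Proof.
pose F p b := summand alpha p (p ^ b) (p ^ false) + summand alpha p (p ^ b) (p ^ true).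
rewrite (eq_big_seq (fun c => \prod_(p <- s) F p (p %| c)%N)); last first.
  move=> c; rewrite -dvdn_divisors ?prod_primes_gt0 // => c_dvd.
  by rewrite [in LHS](divisor_prod_primesE _ s_uniq s_pr c_dvd) sum_divisors_summand.
rewrite (sum_divisors_prod_primes F) // natr_prod_sqrV -big_split.
by apply: eq_big_seq => p p_s; exact: summand_prime_sum_cd (allP s_pr p p_s).
Qed.

End SquarefreeSums.

Theorem lemma6 (R : realType) (alpha M : R) (k : nat) :
  0 < alpha -> alpha < 1 / 2 -> 0 < M -> k = primorial M ->
  (forall c : nat, (0 < c)%N -> (c %| k)%N ->
     (k%:R ^+ 2)^-1 * \sum_(d <- divisors k) summand alpha k c d
     = (\prod_(p <- primes k)
          (p%:R^-1 * (1 - p%:R^-1) + (1 - p%:R^-1) `^ (2 - 2 * alpha)))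
       * (c%:R / k%:R) * fmul alpha (k %/ c)) /\
  (k%:R ^+ 2)^-1 * \sum_(c <- divisors k) \sum_(d <- divisors k) summand alpha k c d
  = \prod_(p <- primes k)
      (p%:R `^ (2 * alpha - 2) * (1 - p%:R^-1) `^ (2 * alpha)
       + 2 / p%:R * (1 - p%:R^-1) + (1 - p%:R^-1) `^ (2 - 2 * alpha)).
Proof.
(* The identities hold for every real alpha and do not use M > 0. *)
move=> _ _ _ ->.
set s := [seq p <- iota 0 (Num.truncn M).+1 | prime p && (p%:R <= M)].
have s_uniq : uniq s by rewrite filter_uniq ?iota_uniq.
have s_pr : all prime s by apply/allP => p; rewrite mem_filter => /andP[/andP[]].
have -> : primorial M = \prod_(p <- s) p by rewrite /primorial big_filter.
rewrite !(perm_big _ (primes_prod_primes s_uniq s_pr)).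
split=> [c _ c_dvd|]; last exact: sum_cd_summand_prod_primes.
rewrite (divisor_prod_primesE _ s_uniq s_pr c_dvd).
exact: sum_d_summand_prod_expb.
Qed.
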